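(* Let $L$ be a finite modular lattice with exactly two coatoms and $U$ a finite modular lattice with exactly two atoms. Then any vertical 2-sum $L +_2 U$ is a modular lattice.
   Context: Let $L' = L \setminus \{\top_L\}$ and $U' = U \setminus \{\bot_U\}$. A vertical 2-sum $L +_2 U$ is the poset obtained from the disjoint union of $L'$ and $U'$ by identifying the two coatoms of $L$ with the two atoms of $U$ via some bijection; $x \le y$ iff $x,y \in L'$ and $x \le_L y$, or $x,y \in U'$ and $x \le_U y$, or $x \in L'$, $y \in U'$ and there is an identified element $c$ with $x \le_L c$ and $c \le_U y$. (This poset is a lattice.) *)

From mathcomp Require Import all_boot all_order.
Set Implicit Arguments. Unset Strict Implicit. Unset Printing Implicit Defensive.
Import Order.Theory.
Local Open Scope order_scope.

Definition modular {d} (T : latticeType d) : Prop :=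
  forall x y z : T, x <= z -> x `|` (y `&` z) = (x `|` y) `&` z.

Definition coatom {d} {T : tbLatticeType d} (c : T) : Prop :=
  c < \top /\ ~ (exists x : T, c < x /\ x < \top).

Definition atom {d} {T : tbLatticeType d} (a : T) : Prop :=
  \bot < a /\ ~ (exists x : T, \bot < x /\ x < a).

Section VSum.
Context {d1 d2 : Order.disp_t} {L : finTBLatticeType d1} {U : finTBLatticeType d2}.
(* Identification: coatom c1 of L <-> atom a1 of U, coatom c2 <-> atom a2.
   The identified elements are represented on the L side. *)
Variables (c1 c2 : L) (a1 a2 : U).

Definition vsum2_carrier (p : L + U) : bool :=
  match p with
  | inl x => x != \top
  | inr u => [&& u != \bot, u != a1 & u != a2]
  end.

Definition vsum2_le (p q : L + U) : bool :=
  match p, q with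
  | inl x, inl y => x <= y
  | inr u, inr v => u <= v
  | inl x, inr v => ((x <= c1) && (a1 <= v)) || ((x <= c2) && (a2 <= v))
  | inr _, inl _ => false
  end.
End VSum.

Definition is_lub {T : Type} (S : T -> Prop) (le : T -> T -> Prop) (x y j : T) :=
  S j /\ le x j /\ le y j /\ (forall k, S k -> le x k -> le y k -> le j k).

Definition is_glb {T : Type} (S : T -> Prop) (le : T -> T -> Prop) (x y m : T) :=
  S m /\ le m x /\ le m y /\ (forall k, S k -> le k x -> le k y -> le k m).

Definition modular_lattice_on {T : Type} (S : T -> Prop) (le : T -> T -> Prop) : Prop :=
  (forall x, S x -> le x x) /\
  (forall x y, S x -> S y -> le x y -> le y x -> x = y) /\
  (forall x y z, S x -> S y -> S z -> le x y -> le y z -> le x z) /\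
  (forall x y, S x -> S y -> exists j, is_lub S le x y j) /\
  (forall x y, S x -> S y -> exists m, is_glb S le x y m) /\
  (forall x y z m j k l, S x -> S y -> S z -> le x z ->
     is_glb S le y z m -> is_lub S le x m k ->
     is_lub S le x y j -> is_glb S le j z l -> k = l).

(* Send x in L' to (x, toU x) and u in U' to (toL u, u) in L * U, where toU x is the meet of
   the atoms a_i whose coatom c_i lies above x and toL u is the join of the coatoms c_i whose
   atom a_i lies below u (an empty meet read as a1 `|` a2, an empty join as c1 `&` c2).  This
   is an order embedding of the 2-sum; its L-coordinate preserves meets, and joins unless both
   arguments lie in U', and dually for its U-coordinate.  Hence if p <= r have the same meet
   and the same join with q, cancellation in the modular lattice L or U equates one coordinate
   of p and r, which gives p = r or a contradiction, except when p = x and q = y lie in L' and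
   r in U'.  There the equal joins force x `|` y = \top in L and r <= a1 `|` a2 in U, so
   r = a1 `|` a2 by modularity of U, and the equal L-coordinates give x = \top.  A lattice
   without such pentagons is modular. *)

From mathcomp Require Import all_boot all_order.
Import Order.Theory.
Local Open Scope order_scope.

Lemma coatom_neq_top {d} {T : tbLatticeType d} {c : T} : coatom c -> c != \top.
Proof. by case=> /lt_eqF ->. Qed.

Lemma coatom_le_eq {d} {T : tbLatticeType d} {c x : T} :
  coatom c -> c <= x -> x != \top -> x = c.
Proof.
move=> [_ cmax]; rewrite le_eqVlt => /predU1P[-> //|cx] xT.
by case: cmax; exists x; rewrite cx lt_neqAle xT lex1.
Qed.

Lemma coatom_join {d} {T : tbLatticeType d} {c x : T} :
  coatom c -> ~~ (x <= c) -> x `|` c = \top.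
Proof.
move=> cc; apply: contraNeq => xcT.
by rewrite -(coatom_le_eq cc (leUr c x) xcT) leUl.
Qed.

Lemma coatom_incomparable {d} {T : tbLatticeType d} (c c' : T) :
  coatom c -> coatom c' -> c != c' -> ~~ (c <= c').
Proof.
move=> cc cc'; apply: contra => cc'le.
by rewrite (coatom_le_eq cc cc'le (coatom_neq_top cc')).
Qed.

Lemma coatom_above {d} {T : finTBLatticeType d} (x : T) :
  x != \top -> exists2 c : T, coatom c & x <= c.
Proof.
move=> xT; set P := fun y : T => (x <= y) && (y != \top).
have Px : P x by rewrite /P lexx.
case: (arg_maxnP (fun y => #|[set z : T | z <= y]|) Px) => c /andP[xc cT] cmax.
exists c => //; split; first by rewrite lt_neqAle cT lex1.
move=> [w [cw wT]]; have /cmax : P w by rewrite /P (le_trans xc (ltW cw)) lt_eqF.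
apply/negP; rewrite -ltnNge; apply/proper_card/properP; split.
  by apply/subsetP => z; rewrite !inE => zc; apply: le_trans zc (ltW cw).
by exists w; rewrite !inE ?lexx // lt_geF.
Qed.

Lemma atom_coatom_dual {d} {T : tbLatticeType d} (a : T) : atom a <-> coatom (a : T^d).
Proof. by split=> -[a0 amin]; split=> // -[x [? ?]]; apply: amin; exists x. Qed.

Lemma atom_neq_bot {d} {T : tbLatticeType d} {a : T} : atom a -> a != \bot.
Proof. by move/atom_coatom_dual; apply: (@coatom_neq_top _ T^d). Qed.

Lemma atom_le_eq {d} {T : tbLatticeType d} {a x : T} :
  atom a -> x <= a -> x != \bot -> x = a.
Proof. by move/atom_coatom_dual; apply: (@coatom_le_eq _ T^d). Qed.

Lemma atom_meet {d} {T : tbLatticeType d} {a x : T} :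
  atom a -> ~~ (a <= x) -> x `&` a = \bot.
Proof. by move/atom_coatom_dual; apply: (@coatom_join _ T^d). Qed.

Lemma atom_incomparable {d} {T : tbLatticeType d} (a a' : T) :
  atom a -> atom a' -> a != a' -> ~~ (a' <= a).
Proof.
by move=> /atom_coatom_dual aa /atom_coatom_dual; apply: (@coatom_incomparable _ T^d).
Qed.

Lemma atom_below {d} {T : finTBLatticeType d} (x : T) :
  x != \bot -> exists2 a : T, atom a & a <= x.
Proof.
move=> x0; have [a aa ax] := @coatom_above _ T^d x x0.
by exists a; [apply/atom_coatom_dual | exact: ax].
Qed.

Lemma modular_cancel {d} {T : latticeType d} {x y z : T} : modular T ->
  x <= z -> x `&` y = z `&` y -> x `|` y = z `|` y -> x = z.
Proof.
move=> modT xz Exy Exz; have := modT x y z xz.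
by rewrite Exz [y `&` z]meetC -Exy meetKU meetC joinKI.
Qed.

Lemma modular_le_join_atom {d} {T : tbLatticeType d} {a b w : T} : modular T ->
  atom b -> a <= w -> w <= a `|` b -> w = a \/ w = a `|` b.
Proof.
move=> modT bb aw wab; have := modT a b w aw; rewrite (meet_r wab) meetC.
have [bw|nbw] := boolP (b <= w); first by rewrite (meet_r bw) => <-; right.
by rewrite (atom_meet bb nbw) joinx0 => ->; left.
Qed.

Section ModularOfN5Free.
Variables (T : Type) (S : T -> Prop) (le : T -> T -> Prop) (join meet : T -> T -> T).
Hypotheses (le_refl_on : forall x, S x -> le x x)
  (le_anti_on : forall {x y}, S x -> S y -> le x y -> le y x -> x = y)
  (le_trans_on : forall {x y z}, S x -> S y -> S z -> le x y -> le y z -> le x z)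
  (join_lub : forall {x y}, S x -> S y -> is_lub S le x y (join x y))
  (meet_glb : forall {x y}, S x -> S y -> is_glb S le x y (meet x y))
  (N5_free : forall {x y z}, S x -> S y -> S z -> le x z ->
     meet x y = meet z y -> join x y = join z y -> x = z).

Lemma is_lub_join {x y j} : S x -> S y -> is_lub S le x y j -> j = join x y.
Proof.
move=> Sx Sy [Sj [xj [yj jmin]]]; have [Sxy [xxy [yxy xymin]]] := join_lub Sx Sy.
by apply: le_anti_on => //; [apply: jmin | apply: xymin].
Qed.

Lemma is_glb_meet {x y m} : S x -> S y -> is_glb S le x y m -> m = meet x y.
Proof.
move=> Sx Sy [Sm [mx [my mmax]]]; have [Sxy [xyx [xyy xymax]]] := meet_glb Sx Sy.
by apply: le_anti_on => //; [apply: xymax | apply: mmax].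
Qed.

Let join_closed {x y} : S x -> S y -> S (join x y).
Proof. by move=> Sx Sy; case: (join_lub Sx Sy). Qed.
Let le_joinl {x y} : S x -> S y -> le x (join x y).
Proof. by move=> Sx Sy; case: (join_lub Sx Sy) => _ []. Qed.
Let le_joinr {x y} : S x -> S y -> le y (join x y).
Proof. by move=> Sx Sy; case: (join_lub Sx Sy) => _ [_ []]. Qed.
Let join_le {x y z} : S x -> S y -> S z -> le x z -> le y z -> le (join x y) z.
Proof. by move=> Sx Sy; case: (join_lub Sx Sy) => _ [_ [_]]; apply. Qed.
Let meet_closed {x y} : S x -> S y -> S (meet x y).
Proof. by move=> Sx Sy; case: (meet_glb Sx Sy). Qed.
Let le_meetl {x y} : S x -> S y -> le (meet x y) x.
Proof. by move=> Sx Sy; case: (meet_glb Sx Sy) => _ []. Qed.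
Let le_meetr {x y} : S x -> S y -> le (meet x y) y.
Proof. by move=> Sx Sy; case: (meet_glb Sx Sy) => _ [_ []]. Qed.
Let le_meet {x y z} : S x -> S y -> S z -> le z x -> le z y -> le z (meet x y).
Proof. by move=> Sx Sy; case: (meet_glb Sx Sy) => _ [_ [_]]; apply. Qed.

Lemma modular_on x y z : S x -> S y -> S z -> le x z ->
  join x (meet y z) = meet (join x y) z.
Proof.
move=> Sx Sy Sz xz.
set a := meet y z; set s := join x a; set j := join x y; set t := meet j z.
have Sa : S a by apply: meet_closed.
have Ss : S s by apply: join_closed.
have Sj : S j by apply: join_closed.
have St : S t by apply: meet_closed.
have ay : le a y by apply: le_meetl.
have az : le a z by apply: le_meetr.
have tj : le t j by apply: le_meetl.
have tz : le t z by apply: le_meetr.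
have yj : le y j by apply: le_joinr.
have st : le s t.
  apply: join_le => //; apply: le_meet => //; [exact: le_joinl | exact: le_trans_on ay yj].
have Sm_sy := meet_closed Ss Sy; have Sm_ty := meet_closed St Sy.
have Sj_sy := join_closed Ss Sy; have Sj_ty := join_closed St Sy.
(* meet t y <= a <= meet s y <= meet t y  and  join t y <= j <= join s y <= join t y *)
apply: (N5_free Ss Sy St st); apply: le_anti_on => //.
- apply: le_meet => //; last exact: le_meetr.
  exact: le_trans_on (le_meetl Ss Sy) st.
- apply: le_meet => //; last exact: le_meetr.
  apply: (@le_trans_on _ a) => //; last exact: le_joinr.
  apply: le_meet => //; first exact: le_meetr.
  exact: le_trans_on (le_meetl St Sy) tz.
- apply: join_le => //; last exact: le_joinr.
  exact: le_trans_on st (le_joinl St Sy).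
- apply: join_le => //; last exact: le_joinr.
  apply: (@le_trans_on _ j) => //; apply: join_le => //; last exact: le_joinr.
  exact: le_trans_on (le_joinl Sx Sa) (le_joinl Ss Sy).
Qed.

Lemma modular_lattice_on_N5_free : modular_lattice_on S le.
Proof.
split; first exact: le_refl_on.
split; first by move=> x y; apply: le_anti_on.
split; first by move=> x y z; apply: le_trans_on.
split; first by move=> x y Sx Sy; exists (join x y); apply: join_lub.
split; first by move=> x y Sx Sy; exists (meet x y); apply: meet_glb.
move=> x y z m j k l Sx Sy Sz xz Hm Hk Hj Hl.
have Sm := meet_closed Sy Sz; have Sj := join_closed Sx Sy.
rewrite (is_glb_meet Sy Sz Hm) in Hk; rewrite (is_lub_join Sx Sy Hj) in Hl.
by rewrite (is_lub_join Sx Sm Hk) (is_glb_meet Sj Sz Hl) modular_on.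
Qed.

End ModularOfN5Free.

Section VerticalTwoSum.
Context {d1 d2 : Order.disp_t} {L : finTBLatticeType d1} {U : finTBLatticeType d2}.
Variables (c1 c2 : L) (a1 a2 : U).
Hypotheses (modL : modular L) (modU : modular U)
  (c12 : c1 != c2) (coatom_c1 : coatom c1) (coatom_c2 : coatom c2)
  (coatomsL : forall c : L, coatom c -> c = c1 \/ c = c2)
  (a12 : a1 != a2) (atom_a1 : atom a1) (atom_a2 : atom a2)
  (atomsU : forall a : U, atom a -> a = a1 \/ a = a2).

Local Notation S := (vsum2_carrier a1 a2).
Local Notation le := (vsum2_le c1 c2 a1 a2).

Lemma le_c1_or_c2 {x : L} : x != \top -> (x <= c1) || (x <= c2).
Proof. by case/coatom_above => c /coatomsL[] -> ->; rewrite ?orbT. Qed.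

Lemma ge_a1_or_a2 {u : U} : u != \bot -> (a1 <= u) || (a2 <= u).
Proof. by case/atom_below => a /atomsU[] -> ->; rewrite ?orbT. Qed.

Let c1_le_c2 : (c1 <= c2) = false.
Proof. exact/negbTE/coatom_incomparable. Qed.
Let c2_le_c1 : (c2 <= c1) = false.
Proof. by apply/negbTE/coatom_incomparable; rewrite // eq_sym. Qed.
Let a2_le_a1 : (a2 <= a1) = false.
Proof. exact/negbTE/atom_incomparable. Qed.
Let a1_le_a2 : (a1 <= a2) = false.
Proof. by apply/negbTE/atom_incomparable; rewrite // eq_sym. Qed.
Let c1_neq_top : (c1 == \top) = false.
Proof. exact/negbTE/coatom_neq_top. Qed.
Let c2_neq_top : (c2 == \top) = false.
Proof. exact/negbTE/coatom_neq_top. Qed.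
Let a1_neq_bot : (a1 == \bot) = false.
Proof. exact/negbTE/atom_neq_bot. Qed.
Let a2_neq_bot : (a2 == \bot) = false.
Proof. exact/negbTE/atom_neq_bot. Qed.

Definition in_upper (u : U) : bool := [&& u != \bot, u != a1 & u != a2].

Lemma in_upperW {u v} : in_upper u -> u <= v -> in_upper v.
Proof.
case/and3P=> u0 ua1 ua2 uv; apply/and3P; split.
- by apply: contraNneq u0 => v0; rewrite -lex0 -v0.
- by apply: contraNneq ua1 => va; rewrite va in uv; rewrite (atom_le_eq atom_a1 uv u0).
- by apply: contraNneq ua2 => va; rewrite va in uv; rewrite (atom_le_eq atom_a2 uv u0).
Qed.

Lemma in_upper_a12 : in_upper (a1 `|` a2).
Proof.
by rewrite /in_upper eq_joinl eq_joinr a1_le_a2 a2_le_a1 -lex0 leUx lex0 a1_neq_bot.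
Qed.

Lemma upper_le_a12 {w} : in_upper w -> w <= a1 `|` a2 -> w = a1 `|` a2.
Proof.
move=> /and3P[w0 wa1 wa2] wa; case/orP: (ge_a1_or_a2 w0) => aw.
  by case: (modular_le_join_atom modU atom_a2 aw wa) => // wa'; rewrite wa' eqxx in wa1.
rewrite joinC in wa *.
by case: (modular_le_join_atom modU atom_a1 aw wa) => // wa'; rewrite wa' eqxx in wa2.
Qed.

Definition toU (x : L) : U :=
  if x <= c1 then (if x <= c2 then \bot else a1) else (if x <= c2 then a2 else a1 `|` a2).

Definition toL (u : U) : L :=
  if a1 <= u then (if a2 <= u then \top else c1) else (if a2 <= u then c2 else c1 `&` c2).

Lemma toU_join : {morph toU : x y / x `|` y}.
Proof.
move=> x y; rewrite /toU !leUx.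
case: (x <= c1); case: (x <= c2); case: (y <= c1); case: (y <= c2) => /=;
  by rewrite ?(join0x, joinx0, joinxx, joinKU, joinUK, joinUKC, joinKUC, joinC a2 a1).
Qed.

Lemma toL_meet : {morph toL : u v / u `&` v}.
Proof.
move=> u v; rewrite /toL !lexI.
case: (a1 <= u); case: (a2 <= u); case: (a1 <= v); case: (a2 <= v) => /=;
  by rewrite ?(meet1x, meetx1, meetxx, meetKI, meetIK, meetIKC, meetKIC, meetC c2 c1).
Qed.

Lemma toU_mono : {homo toU : x y / x <= y}.
Proof. by move=> x y /join_r xy; rewrite -xy toU_join leUl. Qed.

Lemma toL_mono : {homo toL : u v / u <= v}.
Proof. by move=> u v /meet_l uv; rewrite -uv toL_meet leIr. Qed.

Lemma toU_top : toU \top = a1 `|` a2.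
Proof. by rewrite /toU !le1x c1_neq_top c2_neq_top. Qed.

Lemma toL_a12 : toL (a1 `|` a2) = \top.
Proof. by rewrite /toL leUl leUr. Qed.

Lemma toU_not_upper {x} : x != \top -> ~~ in_upper (toU x).
Proof.
move/le_c1_or_c2; rewrite /toU /in_upper.
by case: (x <= c1); case: (x <= c2) => //= _; rewrite eqxx ?andbF.
Qed.

Lemma toL_not_upper {u} : ~~ in_upper u -> toL u != \top.
Proof.
apply: contraNN => uT; apply: in_upperW in_upper_a12 _; rewrite leUx.
move: uT; rewrite /toL; case: (a1 <= u); case: (a2 <= u) => //=;
  by rewrite ?c1_neq_top ?c2_neq_top // meet_eq1 c1_neq_top.
Qed.

Lemma toU_toL {u} : ~~ in_upper u -> toU (toL u) = u.
Proof.
rewrite /in_upper !negb_and !negbK => /or3P[] /eqP->; rewrite /toL /toU.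
- by rewrite !lex0 a1_neq_bot a2_neq_bot leIl leIr.
- by rewrite lexx a2_le_a1 lexx c1_le_c2.
- by rewrite a1_le_a2 lexx c2_le_c1 lexx.
Qed.

Lemma le_inl_inrE x v : x != \top -> in_upper v ->
  le (inl x) (inr v) = (x <= toL v) && (toU x <= v).
Proof.
move=> /le_c1_or_c2 + /and3P[/ge_a1_or_a2 + _ _] /=; rewrite /toL /toU.
case ha1: (a1 <= v); case ha2: (a2 <= v); case hx1: (x <= c1); case hx2: (x <= c2) => //= _ _;
  by rewrite ?ha1 ?ha2 ?lex1 ?le0x ?lexI ?hx1 ?hx2.
Qed.

Let join_c1 x : x `|` c1 = if x <= c1 then c1 else \top.
Proof. by case: ifP => xc; [exact: join_r | exact/coatom_join/negbT]. Qed.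
Let join_c2 x : x `|` c2 = if x <= c2 then c2 else \top.
Proof. by case: ifP => xc; [exact: join_r | exact/coatom_join/negbT]. Qed.
Let meet_a1 v : a1 `&` v = if a1 <= v then a1 else \bot.
Proof. by case: ifP => av; [exact: meet_l | rewrite meetC; exact/atom_meet/negbT]. Qed.
Let meet_a2 v : a2 `&` v = if a2 <= v then a2 else \bot.
Proof. by case: ifP => av; [exact: meet_l | rewrite meetC; exact/atom_meet/negbT]. Qed.

Let le_a2_join_a1 {v} : v != \bot -> (a2 <= a1 `|` v) = (a2 <= v).
Proof.
move=> /ge_a1_or_a2; case: (boolP (a1 <= v)) => [/join_r -> // | _ /= a2v].
by rewrite a2v lexU2 // a2v orbT.
Qed.
Let le_a1_join_a2 {v} : v != \bot -> (a1 <= a2 `|` v) = (a1 <= v).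
Proof.
move=> /ge_a1_or_a2; case: (boolP (a2 <= v)) => [/join_r -> // | _]; rewrite orbF => a1v.
by rewrite a1v lexU2 // a1v orbT.
Qed.

Lemma toL_join_toU x v : x != \top -> in_upper v -> toL (toU x `|` v) = x `|` toL v.
Proof.
move=> xT /and3P[v0 _ _]; move: (le_c1_or_c2 xT) (ge_a1_or_a2 v0).
rewrite /toU; case hx1: (x <= c1); case hx2: (x <= c2) => //= _;
  rewrite ?join0x /toL ?leUl ?(le_a2_join_a1 v0) ?(le_a1_join_a2 v0);
  case ha1: (a1 <= v); case ha2: (a2 <= v) => //= _.
all: by rewrite ?joinx1 ?join_c1 ?join_c2 ?hx1 ?hx2.
Qed.

Let le_meet_c1_c2 {x} : x != \top -> (x `&` c1 <= c2) = (x <= c2).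
Proof.
move=> /le_c1_or_c2; case: (boolP (x <= c1)) => [/meet_l -> // | _ /= xc2].
by rewrite xc2 leIx2 // xc2.
Qed.
Let le_meet_c2_c1 {x} : x != \top -> (x `&` c2 <= c1) = (x <= c1).
Proof.
move=> /le_c1_or_c2; case: (boolP (x <= c2)) => [/meet_l -> // | _]; rewrite orbF => xc1.
by rewrite xc1 leIx2 // xc1.
Qed.

Lemma toU_meet_toL x v : x != \top -> in_upper v -> toU (x `&` toL v) = toU x `&` v.
Proof.
move=> xT /and3P[v0 _ _]; move: (ge_a1_or_a2 v0) (le_c1_or_c2 xT).
rewrite /toL; case ha1: (a1 <= v); case ha2: (a2 <= v) => //= _;
  rewrite ?meetx1 /toU ?leIr ?(le_meet_c1_c2 xT) ?(le_meet_c2_c1 xT);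
  case hx1: (x <= c1); case hx2: (x <= c2) => //= _.
all: by rewrite ?meet0x ?meet_a1 ?meet_a2 ?ha1 ?ha2.
Qed.

Definition projL (p : L + U) : L := match p with inl x => x | inr u => toL u end.
Definition projU (p : L + U) : U := match p with inl x => toU x | inr u => u end.
Definition is_inl (p : L + U) : bool := if p is inl _ then true else false.

Definition vjoin (p q : L + U) : L + U :=
  match p, q with
  | inl x, inl y => if x `|` y == \top then inr (toU (x `|` y)) else inl (x `|` y)
  | _, _ => inr (projU p `|` projU q)
  end.

Definition vmeet (p q : L + U) : L + U :=
  match p, q with
  | inr u, inr v => if in_upper (u `&` v) then inr (u `&` v) else inl (toL (u `&` v))
  | _, _ => inl (projL p `&` projL q)
  end.

Lemma projU_join p q : projU (vjoin p q) = projU p `|` projU q.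
Proof. by case: p q => [x|u] [y|v] //=; case: ifP; rewrite /= toU_join. Qed.

Lemma projL_meet p q : projL (vmeet p q) = projL p `&` projL q.
Proof. by case: p q => [x|u] [y|v] //=; case: ifP; rewrite /= toL_meet. Qed.

Lemma projL_join p q : S p -> S q -> is_inl p || is_inl q ->
  projL (vjoin p q) = projL p `|` projL q.
Proof.
case: p q => [x|u] [y|v] //= Sp Sq _.
- by case: ifP => //= /eqP ->; rewrite toU_top toL_a12.
- exact: toL_join_toU.
- by rewrite joinC toL_join_toU // joinC.
Qed.

Lemma projU_meet p q : S p -> S q -> ~~ is_inl p || ~~ is_inl q ->
  projU (vmeet p q) = projU p `&` projU q.
Proof.
case: p q => [x|u] [y|v] //= Sp Sq _.
- exact: toU_meet_toL.
- by rewrite meetC toU_meet_toL // meetC.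
- by case: ifP => //= /negbT /toU_toL.
Qed.

Lemma vsum2_le_proj p q : S p -> S q -> le p q = (projL p <= projL q) && (projU p <= projU q).
Proof.
case: p q => [x|u] [y|v] /= Sp Sq.
- by rewrite andb_idr // => /toU_mono.
- exact: le_inl_inrE.
- suff /negbTE -> : ~~ (u <= toU y) by rewrite andbF.
  by apply/negP => /(in_upperW Sp); apply/negP/toU_not_upper.
- by rewrite andb_idl // => /toL_mono.
Qed.

Lemma proj_inj p q : S p -> S q -> projL p = projL q -> projU p = projU q -> p = q.
Proof.
case: p q => [x|u] [y|v] /= Sp Sq eqL eqU.
- by rewrite eqL.
- by case/negP: (toU_not_upper Sp); rewrite eqU; exact: Sq.
- by case/negP: (toU_not_upper Sq); rewrite -eqU; exact: Sp.
- by rewrite eqU.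
Qed.

Lemma vsum2_le_refl p : S p -> le p p.
Proof. by move=> Sp; rewrite vsum2_le_proj // !lexx. Qed.

Lemma vsum2_le_anti p q : S p -> S q -> le p q -> le q p -> p = q.
Proof.
move=> Sp Sq; rewrite !vsum2_le_proj // => /andP[pqL pqU] /andP[qpL qpU].
by apply: proj_inj => //; apply: le_anti; rewrite ?pqL ?qpL ?pqU ?qpU.
Qed.

Lemma vsum2_le_trans p q r : S p -> S q -> S r -> le p q -> le q r -> le p r.
Proof.
move=> Sp Sq Sr; rewrite !vsum2_le_proj // => /andP[pqL pqU] /andP[qrL qrU].
by rewrite (le_trans pqL qrL) (le_trans pqU qrU).
Qed.

Lemma vjoin_closed {p q} : S p -> S q -> S (vjoin p q).
Proof.
case: p q => [x|u] [y|v] /= Sp Sq.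
- by case: ifP => [/eqP ->|/negbT //]; rewrite toU_top; exact: in_upper_a12.
- exact: in_upperW Sq (leUr _ _).
- exact: in_upperW Sp (leUl _ _).
- exact: in_upperW Sp (leUl _ _).
Qed.

Lemma vmeet_closed {p q} : S p -> S q -> S (vmeet p q).
Proof.
case: p q => [x|u] [y|v] /= Sp Sq.
- by apply: contraNneq Sp => xyT; rewrite -le1x -xyT leIl.
- by apply: contraNneq Sp => xvT; rewrite -le1x -xvT leIl.
- by apply: contraNneq Sq => uyT; rewrite -le1x -uyT leIr.
- by case: ifP => // /negbT /toL_not_upper.
Qed.

Lemma vsum2_leUx p q k : S p -> S q -> S k -> le (vjoin p q) k = le p k && le q k.
Proof.
move=> Sp Sq; case: k => [z|w] Sk.
- case: p q Sp Sq => [x|u] [y|v] //= Sp Sq; rewrite ?andbF //.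
  case: ifP => [/eqP xyT|_] /=; last by rewrite leUx.
  by rewrite -leUx xyT le1x (negbTE Sk).
- case E: (is_inl p || is_inl q).
    by rewrite !vsum2_le_proj ?vjoin_closed // projL_join // projU_join !leUx andbACA.
  by case: p q Sp Sq E => [x|u] [y|v] //= _ _ _; rewrite leUx.
Qed.

Lemma vsum2_lexI p q k : S p -> S q -> S k -> le k (vmeet p q) = le k p && le k q.
Proof.
move=> Sp Sq; case: k => [z|w] Sk.
- case E: (~~ is_inl p || ~~ is_inl q).
    by rewrite !vsum2_le_proj ?vmeet_closed // projL_meet projU_meet // !lexI andbACA.
  by case: p q Sp Sq E => [x|u] [y|v] //= _ _ _; rewrite lexI.
- case: p q Sp Sq => [x|u] [y|v] //= Sp Sq; rewrite ?andbF //.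
  case: ifP => [_|/negP uvU] /=; first by rewrite lexI.
  by apply/esym/negP => /andP[wu wv]; apply/uvU/(in_upperW Sk); rewrite lexI wu wv.
Qed.

Lemma vjoin_lub p q : S p -> S q -> is_lub S le p q (vjoin p q).
Proof.
move=> Sp Sq; have Sj := vjoin_closed Sp Sq.
have /andP[pj qj] : le p (vjoin p q) && le q (vjoin p q).
  by rewrite -vsum2_leUx // vsum2_le_refl.
by do 3!split=> //; move=> k Sk pk qk; rewrite vsum2_leUx // pk qk.
Qed.

Lemma vmeet_glb p q : S p -> S q -> is_glb S le p q (vmeet p q).
Proof.
move=> Sp Sq; have Sm := vmeet_closed Sp Sq.
have /andP[mp mq] : le (vmeet p q) p && le (vmeet p q) q.
  by rewrite -vsum2_lexI // vsum2_le_refl.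
by do 3!split=> //; move=> k Sk kp kq; rewrite vsum2_lexI // kp kq.
Qed.

Lemma vsum2_N5_free p q r : S p -> S q -> S r -> le p r ->
  vmeet p q = vmeet r q -> vjoin p q = vjoin r q -> p = r.
Proof.
move=> Sp Sq Sr pr eqM eqJ; move: (pr); rewrite vsum2_le_proj // => /andP[prL prU].
have joinU : projU p `|` projU q = projU r `|` projU q by rewrite -!projU_join eqJ.
have cancelL : is_inl p || is_inl q -> is_inl r || is_inl q -> projL p = projL r.
  move=> pq rq; apply: (modular_cancel (y := projL q) modL prL).
    by rewrite -!projL_meet eqM.
  by rewrite -!projL_join // eqJ.
have cancelU : ~~ is_inl p || ~~ is_inl q -> ~~ is_inl r || ~~ is_inl q ->
    projU p = projU r.
  by move=> pq rq; apply: (modular_cancel modU prU _ joinU); rewrite -!projU_meet // eqM.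
case: p r Sp Sr pr joinU cancelL cancelU {prL prU eqM eqJ} => [x|u] [z|w] //= Sp Sr _.
- by move=> _ cancelL _; rewrite (cancelL isT isT).
- case: q Sq => [y|v] /= Sq joinU cancelL cancelU; last first.
    by case/negP: (toU_not_upper Sp); rewrite (cancelU isT isT); exact: Sr.
  have xw : x = toL w := cancelL isT isT.
  have wxy : w <= toU (x `|` y) by rewrite toU_join joinU leUl.
  have xyT : x `|` y = \top.
    by apply/eqP; apply: contraTT (in_upperW Sr wxy); exact: toU_not_upper.
  rewrite xyT toU_top in wxy.
  by move: Sp; rewrite xw (upper_le_a12 Sr wxy) toL_a12 eqxx.
- by move=> _ _ cancelU; rewrite (cancelU isT isT).
Qed.

End VerticalTwoSum.

Theorem lemma3p6 (d1 d2 : Order.disp_t)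
  (L : finTBLatticeType d1) (U : finTBLatticeType d2)
  (c1 c2 : L) (a1 a2 : U) :
  modular L -> modular U ->
  (* L has exactly two coatoms, c1 and c2 *)
  c1 != c2 -> coatom c1 -> coatom c2 -> (forall c : L, coatom c -> c = c1 \/ c = c2) ->
  (* U has exactly two atoms, a1 and a2 *)
  a1 != a2 -> atom a1 -> atom a2 -> (forall a : U, atom a -> a = a1 \/ a = a2) ->
  (* the vertical 2-sum identifying c1 with a1 and c2 with a2 is a modular lattice *)
  modular_lattice_on (fun p => vsum2_carrier a1 a2 p) (fun p q => vsum2_le c1 c2 a1 a2 p q).
Proof.
move=> modL modU c12 coatom_c1 coatom_c2 coatomsL a12 atom_a1 atom_a2 atomsU.
apply: (@modular_lattice_on_N5_free _ _ _ (vjoin c1 c2 a1 a2) (vmeet c1 c2 a1 a2)).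
- exact: vsum2_le_refl.
- by apply: vsum2_le_anti.
- exact: vsum2_le_trans.
- by apply: vjoin_lub.
- by apply: vmeet_glb.
- by apply: vsum2_N5_free.
Qed.
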